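(* Let $\mathbb{Q}[[Z]]$ and $\mathbb{Q}[[X,Y]]$ be the formal power series rings, each equipped with the topology given by the filtration by total degree ($F_p^Z$, resp. $F_p^{X,Y}$, being the set of series having only terms of total degree $\ge p$). Set $z:=e^Z=\sum_{i\ge0}Z^i/i!\in\mathbb{Q}[[Z]]$, so that the Laurent polynomial ring $\mathbb{Q}[z,z^{-1}]$ is a subring of $\mathbb{Q}[[Z]]$. Define a $\mathbb{Q}$-linear map $\hat\mu\colon\mathbb{Q}[z,z^{-1}]\to\mathbb{Q}[[X,Y]]$ by $$\hat{\mu}(z^k)=\begin{cases}-\sum_{i=1}^k e^{iX}e^{(k-i)Y} & (k>0),\\ 0 & (k=0),\\ \sum_{i=0}^{|k|-1}e^{-iX}e^{(k+i)Y} & (k<0).\end{cases}$$ Then there exists a unique continuous map $\hat\mu\colon\mathbb{Q}[[Z]]\to\mathbb{Q}[[X,Y]]$ extending this map.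
   Context: Here $e^{W}$ denotes the formal exponential series $\sum_{i\ge0}W^i/i!$. The subspace topology on $\mathbb{Q}[z,z^{-1}]$ induced from $\mathbb{Q}[[Z]]$ coincides with the $I$-adic topology, where $I$ is the augmentation ideal (kernel of $\sum_j a_jz^j\mapsto\sum_j a_j$). *)

(* Formal power series over Q represented by coefficient
   functions: Q[[Z]] ~ nat -> rat,  Q[[X,Y]] ~ nat -> nat -> rat. *)
From mathcomp Require Import all_boot all_order all_algebra.
Set Implicit Arguments. Unset Strict Implicit. Unset Printing Implicit Defensive.
Import Order.TTheory GRing.Theory Num.Theory.
Local Open Scope ring_scope.

Definition serZ := nat -> rat.
Definition serXY := nat -> nat -> rat.

Definition inFZ (p : nat) (f : serZ) : Prop := forall n, (n < p)%N -> f n = 0.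
Definition inFXY (p : nat) (g : serXY) : Prop :=
  forall a b, (a + b < p)%N -> g a b = 0.

Definition subZ (f g : serZ) : serZ := fun n => f n - g n.
Definition subXY (f g : serXY) : serXY := fun a b => f a b - g a b.

(* Continuity for the (translation-invariant) filtration topologies, whose
   neighbourhood bases at a point x are the cosets x + F_p. *)
Definition filt_continuous (F : serZ -> serXY) : Prop :=
  forall (a : serZ) (q : nat), exists p : nat,
    forall b : serZ, inFZ p (subZ b a) -> inFXY q (subXY (F b) (F a)).

(* e^{kZ} = z^k in Q[[Z]] *)
Definition expZ (k : int) : serZ := fun n => (k%:~R : rat) ^+ n / (n`!)%:R.

Definition expXY (i j : int) : serXY :=
  fun a b => ((i%:~R : rat) ^+ a / (a`!)%:R) * ((j%:~R : rat) ^+ b / (b`!)%:R).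

Definition mu_mono (k : int) : serXY :=
  fun a b =>
    if (0 < k) then - \sum_(1 <= i < `|k|%N.+1) expXY i%:Z (k - i%:Z) a b
    else if k == 0 then 0
    else \sum_(0 <= i < `|k|%N) expXY (- i%:Z) (k + i%:Z) a b.

(* A Laurent polynomial \sum c_k z^k of Q[z,z^{-1}] is given by a finite
   list of pairs (k, c_k). *)
Definition laurent := seq (int * rat).

Definition laurent_series (s : laurent) : serZ :=
  fun n => \sum_(x <- s) x.2 * expZ x.1 n.

Definition mu_laurent (s : laurent) : serXY :=
  fun a b => \sum_(x <- s) x.2 * mu_mono x.1 a b.

(* The coefficient of X^a Y^b in mu(z^k) is -1/(a! b!) times the sum of
   i^a (k - i)^b over 1 <= i <= k (resp. minus the sum over k < i <= 0), so by
   Faulhaber's formula it is P_{a,b}(k) for a polynomial P_{a,b}.  As the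
   coefficient of Z^n in z^k is k^n/n!, the extension is
   f |-> sum_n (P_{a,b})_n n! f_n, whose (a,b)-coefficient only reads
   finitely many coefficients of f, hence it is continuous.  Uniqueness holds
   because the Vandermonde matrix of 0, ..., p-1 is invertible, so the
   truncations of the z^k, k >= 0, span every truncation of Q[[Z]]. *)

From mathcomp Require Import all_boot all_order all_algebra.
From mathcomp Require Import ring.
From Stdlib Require Import FunctionalExtensionality.
Set Implicit Arguments. Unset Strict Implicit. Unset Printing Implicit Defensive.
Import Order.TTheory GRing.Theory Num.Theory.
Local Open Scope ring_scope.

Section Antidifference.
Variable R : numFieldType.

Definition antidiff (S : {poly R}) (h : R -> R) := forall x, S.[x] - S.[x - 1] = h x.

Lemma antidiff_sum n (h : nat -> R -> R) :
  (forall i, (i < n)%N -> {S | antidiff S (h i)}) ->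
  {S | antidiff S (fun x => \sum_(i < n) h i x)}.
Proof.
elim: n => [|n IH] hS.
  by exists 0 => x; rewrite big_ord0 !horner0 subr0.
have [S1 S1E] := IH (fun i lt_in => hS i (ltnW lt_in)).
have [S2 S2E] := hS n (ltnSn n).
by exists (S1 + S2) => x; rewrite big_ord_recr !hornerD opprD addrACA S1E S2E.
Qed.

Lemma antidiffZ c S h : antidiff S h -> antidiff (c *: S) (fun x => c * h x).
Proof. by move=> Sh x; rewrite !hornerZ -mulrBr Sh. Qed.

Lemma antidiff_exprn m : {S | antidiff S (fun x => x ^+ m)}.
Proof.
elim/ltn_ind: m => m IH.
pose c i : R := (-1) ^+ i.+2 *+ 'C(m.+1, i.+2).
have [S SE] : {S | antidiff S (fun x => \sum_(i < m) c i * x ^+ (m - i.+1))}.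
  apply: (@antidiff_sum m (fun i x => c i * x ^+ (m - i.+1)%N)) => i lt_im.
  have [|S SE] := IH (m - i.+1)%N.
    by rewrite ltn_subrL /= (leq_ltn_trans (leq0n i) lt_im).
  by exists (c i *: S); apply: antidiffZ.
(* (x - 1)^(m+1) = x^(m+1) - (m+1) x^m + sum_(i < m) c i x^(m-1-i) *)
exists ((m.+1)%:R^-1 *: ('X^(m.+1) + S)) => x.
rewrite !hornerZ -mulrBr !hornerD !hornerXn opprD addrACA SE.
rewrite (exprDn x (-1) m.+1) !big_ord_recl /= /bump /= subn0 bin0 bin1.
under eq_bigr => i _ do rewrite !add1n subSS -mulrnAr mulrC -/(c i).
rewrite addn0 subSS subn0 expr0 expr1 mulr1 mulr1n mulrN1 mulNrn -(mulr_natr (x ^+ m)).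
field.
by rewrite addrC natr1 pnatr_eq0.
Qed.

Definition faulhaber m : {poly R} := sval (antidiff_exprn m).

Lemma faulhaberP m : antidiff (faulhaber m) (fun x => x ^+ m).
Proof. exact: svalP (antidiff_exprn m). Qed.

Definition signed_sum (h : R -> R) (k : int) : R :=
  if 0 <= k then \sum_(1 <= i < `|k|%N.+1) h i%:R
  else - \sum_(0 <= i < `|k|%N) h (- i%:R).

Lemma signed_sumE S h k : antidiff S h -> signed_sum h k = S.[k%:~R] - S.[0].
Proof.
move=> Sh; case: k => n; rewrite /signed_sum /=.
  rewrite -pmulrn; elim: n => [|n IH]; first by rewrite big_geq // subrr.
  by rewrite big_nat_recr //= IH -Sh -natr1 addrK addrC addrA subrK.
rewrite NegzE mulrNz -pmulrn -opprB; congr (- _).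
elim: n.+1 => [|m IH]; first by rewrite big_geq // oppr0 subrr.
by rewrite big_nat_recr //= IH -Sh -natr1 opprD addrA subrK.
Qed.

Lemma antidiff_binomial K a b :
  antidiff (\sum_(j < b.+1) (K ^+ (b - j) * (-1) ^+ j *+ 'C(b, j)) *: faulhaber (a + j))
           (fun x => x ^+ a * (K - x) ^+ b).
Proof.
move=> x; rewrite !horner_sum -sumrB (exprDn K (- x) b) big_distrr /=.
by apply: eq_bigr => j _; rewrite !hornerZ -mulrBr faulhaberP (exprNn x) exprD; ring.
Qed.

Lemma signed_sum_binomial_poly a b :
  {P : {poly R} | forall k : int,
     signed_sum (fun x => x ^+ a * (k%:~R - x) ^+ b) k = P.[k%:~R]}.
Proof.
exists (\sum_(j < b.+1) ('X^(b - j) * ((-1) ^+ j *+ 'C(b, j))%:P) *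
          (faulhaber (a + j) - ((faulhaber (a + j)).[0])%:P)) => k.
rewrite (signed_sumE _ (antidiff_binomial _ _ _)) !horner_sum -sumrB.
apply: eq_bigr => j _.
rewrite !hornerZ -mulrBr !hornerM hornerD hornerN !hornerC hornerXn; ring.
Qed.

End Antidifference.

Lemma exists_power_sum_weights (R : numFieldType) p (t : nat -> R) :
  exists w : 'I_p -> R, forall n, (n < p)%N -> \sum_(j < p) w j * j%:R ^+ n = t n.
Proof.
pose V := Vandermonde p (\row_(j < p) (j : nat)%:R : 'rV[R]_p).
have V_unit : V \in unitmx.
  rewrite unitmxE det_Vandermonde unitfE.
  apply/prodf_neq0 => i _; apply/prodf_neq0 => j lt_ij.
  by rewrite !mxE subr_eq0 eqr_nat gtn_eqF.
pose w := invmx V *m \col_(i < p) t i.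
exists (fun j => w j 0) => n lt_np.
have := congr1 (fun M : 'cV_p => M (Ordinal lt_np) 0) (mulKVmx V_unit (\col_i t i)).
rewrite !mxE => <-; apply: eq_bigr => j _.
by rewrite !mxE mulrC.
Qed.

Lemma mu_monoE k a b :
  mu_mono k a b =
  - ((a`!)%:R * (b`!)%:R)^-1 * signed_sum (fun x : rat => x ^+ a * (k%:~R - x) ^+ b) k.
Proof.
case: k => [[|n]|n]; rewrite /mu_mono /signed_sum /=.
- by rewrite big_geq // mulr0.
- rewrite mulNr big_distrr /=; congr (- _); apply: eq_bigr => i _.
  by rewrite /expXY mulrzBr -!pmulrn invfM; ring.
rewrite mulrN mulNr opprK big_distrr /=; apply: eq_bigr => i _.
by rewrite /expXY mulrzDr mulrNz -!pmulrn NegzE mulrNz -pmulrn invfM opprK; ring.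
Qed.

Lemma laurent_series_dense (f : serZ) p :
  exists s : laurent, inFZ p (subZ (laurent_series s) f).
Proof.
have [w wE] := exists_power_sum_weights p (fun n => f n * (n`!)%:R).
exists [seq ((val j)%:Z, w j) | j <- enum 'I_p] => n lt_np.
have fact_neq0 : (n`!)%:R != 0 :> rat by rewrite pnatr_eq0 -lt0n fact_gt0.
rewrite /subZ /laurent_series big_map big_enum /=; apply/eqP; rewrite subr_eq0; apply/eqP.
apply: (mulIf fact_neq0); rewrite -wE // mulr_suml; apply: eq_bigr => j _.
by rewrite /expZ -mulrA mulfVK.
Qed.

Lemma filt_continuous_local (F : serZ -> serXY) (N : nat -> nat -> nat) :
  (forall f g a b, (forall n, (n < N a b)%N -> f n = g n) -> F f a b = F g a b) ->
  filt_continuous F.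
Proof.
move=> F_local f q.
exists (\max_(a < q) \max_(b < q) N a b)%N => g g_near a b lt_abq.
have lt_aq : (a < q)%N by exact: leq_ltn_trans (leq_addr b a) lt_abq.
have lt_bq : (b < q)%N by exact: leq_ltn_trans (leq_addl a b) lt_abq.
rewrite /subXY (F_local g f) ?subrr // => n lt_nN; apply/subr0_eq/g_near.
apply: (leq_trans lt_nN); apply: (leq_trans _ (leq_bigmax (Ordinal lt_aq))).
exact: (leq_bigmax (F := fun b : 'I_q => N a b) (Ordinal lt_bq)).
Qed.

Lemma filt_continuous_eq_on_dense T (i : T -> serZ) (F G : serZ -> serXY) :
  (forall f p, exists s, inFZ p (subZ (i s) f)) ->
  filt_continuous F -> filt_continuous G -> (forall s, F (i s) = G (i s)) -> F = G.
Proof.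
move=> i_dense F_cont G_cont FG_i.
apply: functional_extensionality => f; apply: functional_extensionality => a.
apply: functional_extensionality => b.
have [pF FE] := F_cont f (a + b).+1.
have [pG GE] := G_cont f (a + b).+1.
have [s s_near] := i_dense f (maxn pF pG).
have near_F : inFZ pF (subZ (i s) f).
  by move=> n lt_npF; apply: s_near; rewrite (leq_trans lt_npF) ?leq_maxl.
have near_G : inFZ pG (subZ (i s) f).
  by move=> n lt_npG; apply: s_near; rewrite (leq_trans lt_npG) ?leq_maxr.
have /subr0_eq <- := FE _ near_F a b (ltnSn _).
have /subr0_eq <- := GE _ near_G a b (ltnSn _).
by rewrite FG_i.
Qed.

Definition mu_coef_poly a b : {poly rat} :=
  - ((a`!)%:R * (b`!)%:R)^-1 *: sval (signed_sum_binomial_poly rat a b).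

Lemma mu_mono_poly k a b : mu_mono k a b = (mu_coef_poly a b).[k%:~R].
Proof.
by rewrite mu_monoE hornerZ (svalP (signed_sum_binomial_poly rat a b)).
Qed.

Definition mu_hat (f : serZ) : serXY := fun a b =>
  \sum_(n < size (mu_coef_poly a b)) (mu_coef_poly a b)`_n * (n`!)%:R * f n.

Lemma mu_hat_laurent s : mu_hat (laurent_series s) = mu_laurent s.
Proof.
apply: functional_extensionality => a; apply: functional_extensionality => b.
rewrite /mu_hat /laurent_series /mu_laurent.
under eq_bigr do rewrite big_distrr.
rewrite exchange_big /=; apply: eq_bigr => x _.
rewrite mu_mono_poly horner_coef big_distrr; apply: eq_bigr => n _.
have fact_neq0 : (n`!)%:R != 0 :> rat by rewrite pnatr_eq0 -lt0n fact_gt0.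
by rewrite -[RHS]/(x.2 * _) /expZ; field.
Qed.

Lemma mu_hat_continuous : filt_continuous mu_hat.
Proof.
apply: (filt_continuous_local (N := fun a b => size (mu_coef_poly a b))) => f g a b fg.
by apply: eq_bigr => n _; rewrite fg.
Qed.

Theorem lemma2 :
  exists! F : serZ -> serXY,
    filt_continuous F /\
    (forall s : laurent, F (laurent_series s) = mu_laurent s).
Proof.
exists mu_hat; split; first by split; [exact: mu_hat_continuous | exact: mu_hat_laurent].
move=> G [G_cont G_laurent].
apply: (filt_continuous_eq_on_dense laurent_series_dense mu_hat_continuous G_cont).
by move=> s; rewrite mu_hat_laurent G_laurent.
Qed.
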